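(* Let $(M,\varphi,\xi_\alpha,\eta^\alpha,g)$ be an indefinite $\mathcal{S}$-manifold, $\varepsilon=\sum_{\alpha=1}^r\varepsilon_\alpha$, and $P(X,Y;Z,W)=\Phi(X,Z)g(Y,W)-\Phi(X,W)g(Y,Z)-\Phi(Y,Z)g(X,W)+\Phi(Y,W)g(X,Z)$. Let $T$ and $S$ be $(0,4)$-tensor fields on $M$ such that, for $U\in\{T,S\}$: (i) $U(X,Y,Z,W)=-U(Y,X,Z,W)$ for all vector fields $X,Y,Z,W$; (ii) $U(X,Y,Z,W)=-U(X,Y,W,Z)$ for all $X,Y,Z,W$; (iii) $U(X,Y,Z,W)=U(Z,W,X,Y)$ for all $X,Y,Z,W$; (iv) $U(X,Y,Z,W)+U(X,Z,W,Y)+U(X,W,Y,Z)=0$ for all $X,Y,Z,W$; (v) $U(X,Y,\varphi Z,W)+U(X,Y,Z,\varphi W)=\varepsilon P(X,Y;Z,W)$ for all $X,Y,Z,W\in\Gamma(\mathfrak{D})$; and moreover, for all $X,Y\in\Gamma(\mathfrak{D})$ and all $\alpha,\beta,\gamma,\delta\in\{1,\dots,r\}$: (vi)(a) $T(X,\xi_\alpha,X,Y)=S(X,\xi_\alpha,X,Y)$; (b) $T(\xi_\alpha,X,\xi_\beta,Y)=S(\xi_\alpha,X,\xi_\beta,Y)$; (c) $T(\xi_\alpha,X,\xi_\beta,\xi_\gamma)=S(\xi_\alpha,X,\xi_\beta,\xi_\gamma)$; (d) $T(\xi_\alpha,\xi_\beta,\xi_\gamma,\xi_\delta)=S(\xi_\alpha,\xi_\beta,\xi_\gamma,\xi_\delta)$.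 If $T(X,\varphi X,X,\varphi X)=S(X,\varphi X,X,\varphi X)$ for every non-lightlike vector field $X\in\Gamma(\mathfrak{D})$, then $T=S$.
   Context: Let $M$ be a smooth manifold of dimension $2n+r$. An indefinite metric $g.f.f$-structure $(\varphi,\xi_\alpha,\eta^\alpha,g)$, $\alpha=1,\dots,r$, on $M$ consists of a $(1,1)$-tensor field $\varphi$ of constant rank with $\varphi^3+\varphi=0$, vector fields $\xi_1,\dots,\xi_r$, $1$-forms $\eta^1,\dots,\eta^r$ and a semi-Riemannian metric $g$ of index $\nu$, $0<\nu<2n+r$, such that $\varphi^2=-I+\sum_\alpha\eta^\alpha\otimes\xi_\alpha$, $\eta^\alpha(\xi_\beta)=\delta^\alpha_\beta$, $g(\varphi X,\varphi Y)=g(X,Y)-\sum_\alpha\varepsilon_\alpha\eta^\alpha(X)\eta^\alpha(Y)$ and $\varepsilon_\alpha g(X,\xi_\alpha)=\eta^\alpha(X)$ for all $X,Y$, where $\varepsilon_\alpha=g(\xi_\alpha,\xi_\alpha)\in\{1,-1\}$. $\mathfrak{D}=\operatorname{Im}\varphi$. The fundamental $2$-form is $\Phi(X,Y)=g(X,\varphi Y)$; exterior derivative convention $d\omega(X,Y)=\tfrac12(X(\omega(Y))-Y(\omega(X))-\omega([X,Y]))$. With $N_\varphi(X,Y)=\varphi^2[X,Y]+[\varphi X,\varphi Y]-\varphi[\varphi X,Y]-\varphi[X,\varphi Y]$ and $N=N_\varphi+2\sum_\alpha d\eta^\alpha\otimes\xi_\alpha$, an indefinite $\mathcal{S}$-manifold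 is one with $d\eta^\alpha=\Phi$ for all $\alpha$ and $N=0$. A vector $X$ is lightlike if $g(X,X)=0$. *)

(* Pointwise (tangent-space) formalization. *)
From HB Require Import structures.
From mathcomp Require Import all_boot all_order all_algebra.
Set Implicit Arguments. Unset Strict Implicit. Unset Printing Implicit Defensive.
Import Order.TTheory GRing.Theory Num.Theory.
Local Open Scope ring_scope.

Definition app {R : realFieldType} {m : nat} (phi : 'M[R]_m) (x : 'rV[R]_m) : 'rV[R]_m :=
  x *m phi.

Definition bil {R : realFieldType} {m : nat} (G : 'M[R]_m) (x y : 'rV[R]_m) : R :=
  (x *m G *m y^T) 0 0.

Definition form {R : realFieldType} {m : nat} (e : 'cV[R]_m) (x : 'rV[R]_m) : R :=
  (x *m e) 0 0.

Definition eps {R : realFieldType} {m r : nat} (G : 'M[R]_m) (xi : 'I_r -> 'rV[R]_m)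
  (a : 'I_r) : R := bil G (xi a) (xi a).

Definition Phi {R : realFieldType} {m : nat} (phi G : 'M[R]_m) (x y : 'rV[R]_m) : R :=
  bil G x (app phi y).

Definition indef_metric_gff {R : realFieldType} (n r : nat)
  (phi : 'M[R]_(2 * n + r)) (xi : 'I_r -> 'rV[R]_(2 * n + r))
  (eta : 'I_r -> 'cV[R]_(2 * n + r)) (G : 'M[R]_(2 * n + r)) : Prop :=
  (* g symmetric, nondegenerate, of index nu with 0 < nu < 2n+r *)
      G^T = G /\ G \in unitmx /\
      (exists nu : nat, (0 < nu < 2 * n + r)%N /\
         (exists U : 'M[R]_(nu, 2 * n + r), row_free U /\
            forall c : 'rV[R]_nu, c != 0 -> bil G (c *m U) (c *m U) < 0) /\
         (forall U : 'M[R]_(nu.+1, 2 * n + r), row_free U ->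
            exists c : 'rV[R]_nu.+1, c != 0 /\ 0 <= bil G (c *m U) (c *m U))) /\
      (* phi^3 + phi = 0, constant rank is automatic pointwise *)
      (forall x, app phi (app phi (app phi x)) + app phi x = 0) /\
      (forall x, app phi (app phi x) = - x + \sum_(a < r) form (eta a) x *: xi a) /\
      (forall a b : 'I_r, form (eta a) (xi b) = (a == b)%:R) /\
      (forall x y, bil G (app phi x) (app phi y) =
         bil G x y - \sum_(a < r) eps G xi a * form (eta a) x * form (eta a) y) /\
      (forall a, eps G xi a = 1 \/ eps G xi a = -1) /\
      (forall a x, eps G xi a * bil G x (xi a) = form (eta a) x).

Definition inD {R : realFieldType} {m : nat} (phi : 'M[R]_m) (x : 'rV[R]_m) : Prop :=
  exists y, x = app phi y.

Definition multilinear4 {R : realFieldType} {m : nat}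
  (U : 'rV[R]_m -> 'rV[R]_m -> 'rV[R]_m -> 'rV[R]_m -> R) : Prop :=
  [/\ (forall (c : R) x x' y z w, U (c *: x + x') y z w = c * U x y z w + U x' y z w),
      (forall (c : R) x y y' z w, U x (c *: y + y') z w = c * U x y z w + U x y' z w),
      (forall (c : R) x y z z' w, U x y (c *: z + z') w = c * U x y z w + U x y z' w) &
      (forall (c : R) x y z w w', U x y z (c *: w + w') = c * U x y z w + U x y z w')].

Definition Ptens {R : realFieldType} {m : nat} (phi G : 'M[R]_m) (x y z w : 'rV[R]_m) : R :=
  Phi phi G x z * bil G y w - Phi phi G x w * bil G y z
  - Phi phi G y z * bil G x w + Phi phi G y w * bil G x z.

Definition curv_like {R : realFieldType} (n r : nat)
  (phi : 'M[R]_(2 * n + r)) (xi : 'I_r -> 'rV[R]_(2 * n + r)) (G : 'M[R]_(2 * n + r))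
  (U : 'rV[R]_(2 * n + r) -> 'rV[R]_(2 * n + r) -> 'rV[R]_(2 * n + r) ->
       'rV[R]_(2 * n + r) -> R) : Prop :=
  [/\ (forall x y z w, U x y z w = - U y x z w),
      (forall x y z w, U x y z w = - U x y w z),
      (forall x y z w, U x y z w = U z w x y),
      (forall x y z w, U x y z w + U x z w y + U x w y z = 0) &
      (forall x y z w, inD phi x -> inD phi y -> inD phi z -> inD phi w ->
         U x y (app phi z) w + U x y z (app phi w) =
         (\sum_(a < r) eps G xi a) * Ptens phi G x y z w)].

From Pilot Require Import Defs.
From mathcomp Require Import all_boot all_order all_algebra.
From mathcomp Require Import ring lra.
From Stdlib Require Import Classical FunctionalExtensionality.
Import Order.TTheory GRing.Theory Num.Theory.
Local Open Scope ring_scope.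
Set Implicit Arguments. Unset Strict Implicit. Unset Printing Implicit Defensive.

(* The difference A := T - S is an algebraic curvature tensor satisfying
   A(x,y,phi z,phi w) = A(x,y,z,w) on D (condition (v) becomes homogeneous).  Its
   phi-sectional curvature A(x,phi x,x,phi x) vanishes at non-null x in D, hence on
   all of D: along a line x + t y with y non-null it is a quartic in t vanishing
   off the roots of a nonzero quadratic.  Polarizing gives
   A(x,y,x,y) + 3 A(x,phi y,x,phi y) = 0 on D, and replacing y by phi y shows that
   the sectional curvature of A vanishes on D, so A vanishes on D.  With the
   Bianchi identity, (vi) kills every component involving some xi, and
   TM = D + span(xi) gives A = 0. *)

Lemma poly_eq0_of_horner (R : numDomainType) (p : {poly R}) :
  (forall t, p.[t] = 0) -> p = 0.
Proof.
move=> p0; apply/eqP; apply/negPn/negP => pN0.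
pose ts : seq R := [seq i%:R | i <- iota 0 (size p)].
have roots_ts : all (root p) ts by apply/allP => _ /mapP[i _ ->]; rewrite /root p0.
have uniq_ts : uniq ts.
  by rewrite map_inj_uniq ?iota_uniq // => i j /eqP; rewrite eqr_nat => /eqP.
by have := max_poly_roots pN0 roots_ts uniq_ts; rewrite size_map size_iota ltnn.
Qed.

Lemma poly_eq0_off_roots (R : numDomainType) (p q : {poly R}) :
  q != 0 -> (forall t, q.[t] != 0 -> p.[t] = 0) -> p = 0.
Proof.
move=> qN0 p0; have /eqP : p * q = 0.
  apply: poly_eq0_of_horner => t; rewrite hornerM.
  by have [->|/p0->] := eqVneq q.[t] 0; rewrite ?mulr0 ?mul0r.
by rewrite mulf_eq0 (negbTE qN0) orbF => /eqP.
Qed.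

Lemma quartic_eq0_off_quadratic_roots (R : numDomainType) (c0 c1 c2 c3 c4 d0 d1 d2 : R) :
  d2 != 0 ->
  (forall t, d0 + d1 * t + d2 * t ^+ 2 != 0 ->
     c0 + c1 * t + c2 * t ^+ 2 + c3 * t ^+ 3 + c4 * t ^+ 4 = 0) ->
  forall t, c0 + c1 * t + c2 * t ^+ 2 + c3 * t ^+ 3 + c4 * t ^+ 4 = 0.
Proof.
move=> d2N0 quartic0 t.
pose p : {poly R} := c0%:P + c1%:P * 'X + c2%:P * 'X^2 + c3%:P * 'X^3 + c4%:P * 'X^4.
pose q : {poly R} := d0%:P + d1%:P * 'X + d2%:P * 'X^2.
have qN0 : q != 0.
  apply: contraNneq d2N0 => q0; have : q`_2 = 0 by rewrite q0 coef0.
  by rewrite /q !coefE /= mulr0 mulr1 !add0r => ->.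
have p0 : p = 0.
  apply: (poly_eq0_off_roots qN0) => s.
  by rewrite !(hornerD, hornerCM, hornerXn, hornerX, hornerC); apply: quartic0.
move: (congr1 (horner^~ t) p0).
by rewrite !(hornerD, hornerCM, hornerXn, hornerX, hornerC).
Qed.

Section LinearForms.
Variables (R : realFieldType) (m : nat).
Implicit Types (f : 'rV[R]_m -> R) (x y : 'rV[R]_m) (c : R).

Lemma scalar_fun0 f : scalar f -> f 0 = 0.
Proof. by move=> fL; have := fL 1 0 0; rewrite scale1r addr0 mul1r; lra. Qed.

Lemma scalar_funD f : scalar f -> forall x y, f (x + y) = f x + f y.
Proof. by move=> fL x y; rewrite -{1}(scale1r x) fL mul1r. Qed.

Lemma scalar_funZ f : scalar f -> forall c x, f (c *: x) = c * f x.
Proof. by move=> fL c x; rewrite -(addr0 (c *: x)) fL (scalar_fun0 fL) addr0. Qed.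

Lemma scalar_fun_sum f r (c : 'I_r -> R) (v : 'I_r -> 'rV[R]_m) : scalar f ->
  f (\sum_(a < r) c a *: v a) = \sum_(a < r) c a * f (v a).
Proof.
move=> fL; rewrite (big_morph f (scalar_funD fL) (scalar_fun0 fL)).
by apply: eq_bigr => a _; rewrite scalar_funZ.
Qed.

Lemma scalar_form (e : 'cV[R]_m) : scalar (Defs.form e).
Proof. by move=> c x y; rewrite /Defs.form mulmxDl -scalemxAl !mxE. Qed.

Lemma scalar_bill (G : 'M[R]_m) y : scalar (bil G ^~ y).
Proof. by move=> c x x'; rewrite /bil !mulmxDl -!scalemxAl !mxE. Qed.

Lemma scalar_bilr (G : 'M[R]_m) x : scalar (bil G x).
Proof. by move=> c y y'; rewrite /bil linearD linearZ /= mulmxDr -scalemxAr !mxE. Qed.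

Lemma bilC (G : 'M[R]_m) x y : G^T = G -> bil G x y = bil G y x.
Proof.
move=> GT; rewrite /bil.
have -> : (x *m G *m y^T) 0 0 = ((x *m G *m y^T)^T) 0 0 by rewrite [RHS]mxE.
by rewrite !trmx_mul trmxK GT mulmxA.
Qed.

Lemma bil_line (G : 'M[R]_m) x y t : bil G (x + t *: y) (x + t *: y) =
  bil G x x + (bil G x y + bil G y x) * t + bil G y y * t ^+ 2.
Proof.
rewrite (scalar_funD (scalar_bill _ _)) !(scalar_funD (scalar_bilr _ _)).
by rewrite !(scalar_funZ (scalar_bill _ _)) !(scalar_funZ (scalar_bilr _ _)); ring.
Qed.

Lemma appD (phi : 'M[R]_m) x y : app phi (x + y) = app phi x + app phi y.
Proof. by rewrite /app mulmxDl. Qed.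

Lemma appZ (phi : 'M[R]_m) c x : app phi (c *: x) = c *: app phi x.
Proof. by rewrite /app scalemxAl. Qed.

End LinearForms.

Section Multilinear.
Variables (R : realFieldType) (m : nat).
Variable U : 'rV[R]_m -> 'rV[R]_m -> 'rV[R]_m -> 'rV[R]_m -> R.
Hypothesis U_ml : multilinear4 U.
Implicit Types (x y z w : 'rV[R]_m) (c : R).

Lemma scalar_mlin1 y z w : scalar (fun x => U x y z w).
Proof. by case: U_ml => h _ _ _ c x x'; apply: h. Qed.
Lemma scalar_mlin2 x z w : scalar (fun y => U x y z w).
Proof. by case: U_ml => _ h _ _ c y y'; apply: h. Qed.
Lemma scalar_mlin3 x y w : scalar (fun z => U x y z w).
Proof. by case: U_ml => _ _ h _ c z z'; apply: h. Qed.
Lemma scalar_mlin4 x y z : scalar (fun w => U x y z w).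
Proof. by case: U_ml => _ _ _ h c w w'; apply: h. Qed.

Lemma mlinD1 x x' y z w : U (x + x') y z w = U x y z w + U x' y z w.
Proof. exact: (scalar_funD (scalar_mlin1 y z w)). Qed.
Lemma mlinD2 x y y' z w : U x (y + y') z w = U x y z w + U x y' z w.
Proof. exact: (scalar_funD (scalar_mlin2 x z w)). Qed.
Lemma mlinD3 x y z z' w : U x y (z + z') w = U x y z w + U x y z' w.
Proof. exact: (scalar_funD (scalar_mlin3 x y w)). Qed.
Lemma mlinD4 x y z w w' : U x y z (w + w') = U x y z w + U x y z w'.
Proof. exact: (scalar_funD (scalar_mlin4 x y z)). Qed.
Lemma mlinZ1 c x y z w : U (c *: x) y z w = c * U x y z w.
Proof. exact: (scalar_funZ (scalar_mlin1 y z w)). Qed.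
Lemma mlinZ2 c x y z w : U x (c *: y) z w = c * U x y z w.
Proof. exact: (scalar_funZ (scalar_mlin2 x z w)). Qed.
Lemma mlinZ3 c x y z w : U x y (c *: z) w = c * U x y z w.
Proof. exact: (scalar_funZ (scalar_mlin3 x y w)). Qed.
Lemma mlinZ4 c x y z w : U x y z (c *: w) = c * U x y z w.
Proof. exact: (scalar_funZ (scalar_mlin4 x y z)). Qed.
Lemma mlinN2 x y z w : U x (- y) z w = - U x y z w.
Proof. by rewrite -scaleN1r mlinZ2 mulN1r. Qed.
Lemma mlinN4 x y z w : U x y z (- w) = - U x y z w.
Proof. by rewrite -scaleN1r mlinZ4 mulN1r. Qed.
Lemma mlin0 y z w : U 0 y z w = 0.
Proof. exact: (scalar_fun0 (scalar_mlin1 y z w)). Qed.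

Lemma mlin_diag_expand x y t :
  U (x + t *: y) (x + t *: y) (x + t *: y) (x + t *: y) =
  U x x x x + (U y x x x + U x y x x + U x x y x + U x x x y) * t
  + (U y y x x + U y x y x + U y x x y + U x y y x + U x y x y + U x x y y) * t ^+ 2
  + (U x y y y + U y x y y + U y y x y + U y y y x) * t ^+ 3
  + U y y y y * t ^+ 4.
Proof. by rewrite !mlinD1 !mlinD2 !mlinD3 !mlinD4 !mlinZ1 !mlinZ2 !mlinZ3 !mlinZ4; ring. Qed.

Lemma mlin_eq0_on_spanning (K : 'rV[R]_m -> Prop) :
  (forall f, scalar f -> (forall k, K k -> f k = 0) -> forall u, f u = 0) ->
  (forall k1 k2 k3 k4, K k1 -> K k2 -> K k3 -> K k4 -> U k1 k2 k3 k4 = 0) ->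
  forall x y z w, U x y z w = 0.
Proof.
move=> K_span UK x y z w.
apply: (K_span _ (scalar_mlin1 y z w)) => k1 K1.
apply: (K_span _ (scalar_mlin2 k1 z w)) => k2 K2.
apply: (K_span _ (scalar_mlin3 k1 k2 w)) => k3 K3.
by apply: (K_span _ (scalar_mlin4 k1 k2 k3)) => k4 K4; apply: UK.
Qed.

End Multilinear.

Section AlgebraicCurvature.
Variables (R : realFieldType) (m : nat).
Variable A : 'rV[R]_m -> 'rV[R]_m -> 'rV[R]_m -> 'rV[R]_m -> R.
Hypotheses (A_ml : multilinear4 A)
  (A_skew12 : forall x y z w, A x y z w = - A y x z w)
  (A_skew34 : forall x y z w, A x y z w = - A x y w z)
  (A_pair : forall x y z w, A x y z w = A z w x y)
  (A_bianchi : forall x y z w, A x y z w + A x z w y + A x w y z = 0).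
Variable P : 'rV[R]_m -> Prop.
Hypothesis P_add : forall x y, P x -> P y -> P (x + y).

Lemma curvature_eq0_of_sectional :
  (forall x y, P x -> P y -> A x y x y = 0) ->
  forall x y z w, P x -> P y -> P z -> P w -> A x y z w = 0.
Proof.
move=> sect0.
have sect0_polar x y z : P x -> P y -> P z -> A x y z y = 0.
  move=> Px Py Pz; have := sect0 _ _ (P_add Px Pz) Py.
  by rewrite (mlinD1 A_ml) !(mlinD3 A_ml) !sect0 // (A_pair z y x y); lra.
have skew24 x y z w : P x -> P y -> P z -> P w -> A x y z w = - A x w z y.
  move=> Px Py Pz Pw; have := sect0_polar _ _ _ Px (P_add Py Pw) Pz.
  by rewrite (mlinD2 A_ml) !(mlinD4 A_ml) !sect0_polar //; lra.
move=> x y z w Px Py Pz Pw.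
have := A_bianchi x y z w; have := skew24 x z w y Px Pz Pw Py.
have := skew24 x w y z Px Pw Py Pz; have := A_skew34 x y w z.
have := A_skew34 x z y w; lra.
Qed.

Lemma curvature_eq0_of_diag13 v :
  (forall x y, P x -> P y -> A x v x y = 0) ->
  forall x z w, P x -> P z -> P w -> A x v z w = 0.
Proof.
move=> diag0.
have skew13 x z w : P x -> P z -> P w -> A x v z w = - A z v x w.
  move=> Px Pz Pw; have := diag0 _ _ (P_add Px Pz) Pw.
  by rewrite (mlinD1 A_ml) !(mlinD3 A_ml) !diag0 //; lra.
move=> x z w Px Pz Pw.
have := A_bianchi v x z w; rewrite (A_skew12 v x) (A_skew12 v z) (A_skew12 v w).
rewrite (skew13 z w x) // (A_skew34 w v z x) (skew13 w x z) //.
by rewrite (A_skew34 x v w z); lra.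
Qed.

End AlgebraicCurvature.

Section GffStructure.
Variables (R : realFieldType) (m r : nat).
Variables (phi : 'M[R]_m) (xi : 'I_r -> 'rV[R]_m) (eta : 'I_r -> 'cV[R]_m) (G : 'M[R]_m).
Hypotheses (G_sym : G^T = G) (G_unit : G \in unitmx)
  (phi3 : forall x, app phi (app phi (app phi x)) + app phi x = 0)
  (phi2 : forall x, app phi (app phi x) = - x + \sum_(a < r) Defs.form (eta a) x *: xi a)
  (eta_xi : forall a b, Defs.form (eta a) (xi b) = (a == b)%:R)
  (eps_sign : forall a, eps G xi a = 1 \/ eps G xi a = -1)
  (eta_bil : forall a x, eps G xi a * bil G x (xi a) = Defs.form (eta a) x).
Implicit Types (x y : 'rV[R]_m) (c : R).

Lemma inD_app x : inD phi (app phi x). Proof. by exists x. Qed.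

Lemma inD_add x y : inD phi x -> inD phi y -> inD phi (x + y).
Proof. by case=> x' -> [y' ->]; exists (x' + y'); rewrite appD. Qed.

Lemma inD_scale c x : inD phi x -> inD phi (c *: x).
Proof. by case=> x' ->; exists (c *: x'); rewrite appZ. Qed.

Lemma app2_inD x : inD phi x -> app phi (app phi x) = - x.
Proof. by case=> y ->; apply/eqP; rewrite -addr_eq0 phi3. Qed.

Lemma eta_inD a x : inD phi x -> Defs.form (eta a) x = 0.
Proof.
move=> Dx; have := phi2 x; rewrite app2_inD // => /eqP.
rewrite -subr_eq0 opprD opprK addrA addNr add0r oppr_eq0 => /eqP sum0.
have := congr1 (Defs.form (eta a)) sum0.
rewrite (scalar_fun_sum _ _ (scalar_form _)) (scalar_fun0 (scalar_form _)) (bigD1 a) //=.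
rewrite eta_xi eqxx mulr1 big1 ?addr0 // => b ba.
by rewrite eta_xi eq_sym (negbTE ba) mulr0.
Qed.

Lemma gff_decomposition u :
  u = app phi (- app phi u) + \sum_(a < r) Defs.form (eta a) u *: xi a.
Proof.
have -> : app phi (- app phi u) = - app phi (app phi u) by rewrite /app mulNmx.
by rewrite phi2 opprD opprK subrK.
Qed.

Definition D_or_xi k := inD phi k \/ exists a, k = xi a.

Lemma scalar_eq0_on_D_or_xi f : scalar f ->
  (forall k, D_or_xi k -> f k = 0) -> forall u, f u = 0.
Proof.
move=> fL f0 u; rewrite (gff_decomposition u) (scalar_funD fL) f0; last first.
  by left; exists (- app phi u).
rewrite add0r (scalar_fun_sum _ _ fL) big1 // => a _.
by rewrite f0 ?mulr0 //; right; exists a.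
Qed.

Lemma bil_inD_xi a x : inD phi x -> bil G x (xi a) = 0.
Proof.
move=> Dx; have := eta_bil a x; rewrite eta_inD //.
by case: (eps_sign a) => ->; rewrite ?mul1r ?mulN1r // => /eqP; rewrite oppr_eq0 => /eqP.
Qed.

Lemma inD_eq0_of_null : (forall y, inD phi y -> bil G y y = 0) ->
  forall x, inD phi x -> x = 0.
Proof.
move=> null x Dx.
have bil_x0 : forall w, bil G x w = 0.
  apply: (scalar_eq0_on_D_or_xi (scalar_bilr _ _)) => y [Dy|[a ->]]; last exact: bil_inD_xi.
  have := null _ (inD_add Dx Dy); rewrite (scalar_funD (scalar_bill _ _)).
  by rewrite !(scalar_funD (scalar_bilr _ _)) !null // (bilC _ _ G_sym); lra.
have xG0 : x *m G = 0.
  by apply/rowP => j; have := bil_x0 (delta_mx 0 j); rewrite /bil trmx_delta -colE !mxE.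
by rewrite -(mulmxK G_unit x) xG0 mul0mx.
Qed.

Section DifferenceTensor.
Variable A : 'rV[R]_m -> 'rV[R]_m -> 'rV[R]_m -> 'rV[R]_m -> R.
Hypotheses (A_ml : multilinear4 A)
  (A_skew12 : forall x y z w, A x y z w = - A y x z w)
  (A_skew34 : forall x y z w, A x y z w = - A x y w z)
  (A_pair : forall x y z w, A x y z w = A z w x y)
  (A_bianchi : forall x y z w, A x y z w + A x z w y + A x w y z = 0)
  (A_phi : forall {x y z w}, inD phi x -> inD phi y -> inD phi z -> inD phi w ->
     A x y (app phi z) w + A x y z (app phi w) = 0)
  (A_DxiD : forall x y a, inD phi x -> inD phi y -> A x (xi a) x y = 0)
  (A_xiDxiD : forall x y a b, inD phi x -> inD phi y -> A (xi a) x (xi b) y = 0)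
  (A_xiDxixi : forall x (a b c : 'I_r), inD phi x -> A (xi a) x (xi b) (xi c) = 0)
  (A_xi : forall a b c d : 'I_r, A (xi a) (xi b) (xi c) (xi d) = 0)
  (A_phisect_nonnull : forall x, inD phi x -> bil G x x != 0 ->
     A x (app phi x) x (app phi x) = 0).

Lemma A_phi_pair x y z w : inD phi x -> inD phi y -> inD phi z -> inD phi w ->
  A x y (app phi z) (app phi w) = A x y z w.
Proof.
move=> Dx Dy Dz Dw; have := A_phi Dx Dy Dz (inD_app w).
by rewrite app2_inD // (mlinN4 A_ml); lra.
Qed.

Let Aphi x y z w := A x (app phi y) z (app phi w).

Lemma Aphi_ml : multilinear4 Aphi.
Proof.
case: A_ml => h1 h2 h3 h4; split; rewrite /Aphi.
- by move=> c x x' y z w; rewrite h1.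
- by move=> c x y y' z w; rewrite appD appZ h2.
- by move=> c x y z z' w; rewrite h3.
- by move=> c x y z w w'; rewrite appD appZ h4.
Qed.

Lemma A_phisect_eq0 x : inD phi x -> Aphi x x x x = 0.
Proof.
move=> Dx.
have [[y [Dy ny]]|all_null] := classic (exists y, inD phi y /\ bil G y y != 0).
  have := mlin_diag_expand Aphi_ml x y 0; rewrite scale0r addr0 => ->.
  apply: (quartic_eq0_off_quadratic_roots (d0 := bil G x x) (d1 := bil G x y + bil G y x) ny).
  move=> t nt.
  rewrite -(mlin_diag_expand Aphi_ml); apply: A_phisect_nonnull.
    by apply: inD_add => //; apply: inD_scale.
  by rewrite bil_line.
have -> : x = 0.
  apply: inD_eq0_of_null => // y Dy.
  by apply/eqP/negPn/negP => ny; apply: all_null; exists y.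
by rewrite /Aphi (mlin0 A_ml).
Qed.

Lemma A_phisect_polar x y : inD phi x -> inD phi y ->
  Aphi y y x x + Aphi y x y x + Aphi y x x y + Aphi x y y x + Aphi x y x y + Aphi x x y y = 0.
Proof.
move=> Dx Dy; have Dline t : inD phi (x + t *: y) by apply: inD_add => //; apply: inD_scale.
have := mlin_diag_expand Aphi_ml x y 1; have := mlin_diag_expand Aphi_ml x y (-1).
by rewrite !A_phisect_eq0 //; lra.
Qed.

Lemma A_sect_phisect x y : inD phi x -> inD phi y ->
  A x y x y + 3 * A x (app phi y) x (app phi y) = 0.
Proof.
move=> Dx Dy; have [Dpx Dpy] := (inD_app x, inD_app y).
have := A_phisect_polar Dx Dy; rewrite /Aphi.
set Y := A x (app phi y) x (app phi y).
have e1 : A x (app phi y) y (app phi x) = Y.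
  by rewrite -A_phi_pair // app2_inD // (mlinN4 A_ml) -A_skew34.
have e2 : A y (app phi x) y (app phi x) = Y.
  by rewrite -A_phi_pair // app2_inD // (mlinN4 A_ml) -A_skew34 A_pair.
have e3 : A x (app phi x) y (app phi y) = A x y x y + Y.
  have := A_bianchi x (app phi x) y (app phi y).
  by rewrite (A_skew34 x y) A_phi_pair // (A_skew34 x (app phi y)) e1; lra.
(* the six polarization terms add up to 2 A(x,y,x,y) + 6 Y *)
by rewrite (A_pair y (app phi y)) (A_pair y (app phi x) x) e1 e2 e3; lra.
Qed.

Lemma A_sect_eq0 x y : inD phi x -> inD phi y -> A x y x y = 0.
Proof.
move=> Dx Dy; have := A_sect_phisect Dx (inD_app y).
rewrite app2_inD // (mlinN2 A_ml) (mlinN4 A_ml) opprK.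
by have := A_sect_phisect Dx Dy; lra.
Qed.

Lemma A_eq0_on_D x y z w : inD phi x -> inD phi y -> inD phi z -> inD phi w ->
  A x y z w = 0.
Proof. exact: (curvature_eq0_of_sectional A_ml A_skew34 A_pair A_bianchi inD_add A_sect_eq0). Qed.

Lemma A_DxDD x a z w : inD phi x -> inD phi z -> inD phi w -> A x (xi a) z w = 0.
Proof.
apply: (curvature_eq0_of_diag13 A_ml A_skew12 A_skew34 A_bianchi inD_add).
by move=> u v; apply: A_DxiD.
Qed.
Lemma A_xDDD x a z w : inD phi x -> inD phi z -> inD phi w -> A (xi a) x z w = 0.
Proof. by move=> *; rewrite A_skew12 A_DxDD ?oppr0. Qed.
Lemma A_DDxD x y a w : inD phi x -> inD phi y -> inD phi w -> A x y (xi a) w = 0.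
Proof. by move=> *; rewrite A_pair A_xDDD. Qed.
Lemma A_DDDx x y z a : inD phi x -> inD phi y -> inD phi z -> A x y z (xi a) = 0.
Proof. by move=> *; rewrite A_skew34 A_DDxD ?oppr0. Qed.

Lemma A_xxDD a b x y : inD phi x -> inD phi y -> A (xi a) (xi b) x y = 0.
Proof.
move=> Dx Dy; have := A_bianchi (xi a) (xi b) x y.
by rewrite (A_skew34 (xi a) x y) !A_xiDxiD //; lra.
Qed.
Lemma A_DDxx a b x y : inD phi x -> inD phi y -> A x y (xi a) (xi b) = 0.
Proof. by move=> *; rewrite A_pair A_xxDD. Qed.
Lemma A_xDDx a b x y : inD phi x -> inD phi y -> A (xi a) x y (xi b) = 0.
Proof. by move=> *; rewrite A_skew34 A_xiDxiD ?oppr0. Qed.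
Lemma A_DxxD a b x y : inD phi x -> inD phi y -> A x (xi a) (xi b) y = 0.
Proof. by move=> *; rewrite A_skew12 A_xiDxiD ?oppr0. Qed.
Lemma A_DxDx a b x y : inD phi x -> inD phi y -> A x (xi a) y (xi b) = 0.
Proof. by move=> *; rewrite A_skew12 A_xDDx ?oppr0. Qed.

Lemma A_Dxxx (a b c : 'I_r) x : inD phi x -> A x (xi a) (xi b) (xi c) = 0.
Proof. by move=> *; rewrite A_skew12 A_xiDxixi ?oppr0. Qed.
Lemma A_xxDx (a b c : 'I_r) x : inD phi x -> A (xi a) (xi b) x (xi c) = 0.
Proof. by move=> *; rewrite A_pair A_Dxxx. Qed.
Lemma A_xxxD (a b c : 'I_r) x : inD phi x -> A (xi a) (xi b) (xi c) x = 0.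
Proof. by move=> *; rewrite A_pair A_xiDxixi. Qed.

Lemma A_eq0_on_D_or_xi k1 k2 k3 k4 :
  D_or_xi k1 -> D_or_xi k2 -> D_or_xi k3 -> D_or_xi k4 -> A k1 k2 k3 k4 = 0.
Proof.
case=> [?|[? ->]]; case=> [?|[? ->]]; case=> [?|[? ->]]; case=> [?|[? ->]].
all: first [ exact: A_eq0_on_D | exact: A_xDDD | exact: A_DxDD | exact: A_DDxD
  | exact: A_DDDx | exact: A_xxDD | exact: A_DDxx | exact: A_xDDx | exact: A_DxxD
  | exact: A_DxDx | exact: A_xiDxiD | exact: A_Dxxx | exact: A_xxDx | exact: A_xxxD
  | exact: A_xiDxixi | exact: A_xi ].
Qed.

Lemma A_eq0 x y z w : A x y z w = 0.
Proof. exact: (mlin_eq0_on_spanning A_ml scalar_eq0_on_D_or_xi A_eq0_on_D_or_xi). Qed.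
End DifferenceTensor.
End GffStructure.

Theorem mainTheorem16 (R : realFieldType) (n r : nat)
  (phi : 'M[R]_(2 * n + r)) (xi : 'I_r -> 'rV[R]_(2 * n + r))
  (eta : 'I_r -> 'cV[R]_(2 * n + r)) (G : 'M[R]_(2 * n + r))
  (T S : 'rV[R]_(2 * n + r) -> 'rV[R]_(2 * n + r) -> 'rV[R]_(2 * n + r) ->
         'rV[R]_(2 * n + r) -> R) :
  indef_metric_gff phi xi eta G ->
  multilinear4 T -> multilinear4 S ->
  curv_like phi xi G T -> curv_like phi xi G S ->
  (forall x y a, inD phi x -> inD phi y -> T x (xi a) x y = S x (xi a) x y) ->
  (forall x y a b, inD phi x -> inD phi y -> T (xi a) x (xi b) y = S (xi a) x (xi b) y) ->
  (forall x a b c, inD phi x -> T (xi a) x (xi b) (xi c) = S (xi a) x (xi b) (xi c)) ->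
  (forall a b c d, T (xi a) (xi b) (xi c) (xi d) = S (xi a) (xi b) (xi c) (xi d)) ->
  (forall x, inD phi x -> bil G x x != 0 ->
     T x (app phi x) x (app phi x) = S x (app phi x) x (app phi x)) ->
  T = S.
Proof.
move=> [G_sym [G_unit [_ [phi3 [phi2 [eta_xi [_ [eps_sign eta_bil]]]]]]]] T_ml S_ml.
move=> [T12 T34 Tpair Tbianchi Tphi] [S12 S34 Spair Sbianchi Sphi] Ta Tb Tc Td Tsect.
pose A x y z w := T x y z w - S x y z w.
have A_ml : multilinear4 A.
  case: T_ml S_ml => t1 t2 t3 t4 [s1 s2 s3 s4].
  by split=> *; rewrite /A ?t1 ?t2 ?t3 ?t4 ?s1 ?s2 ?s3 ?s4; ring.
do 4 apply: functional_extensionality => ?; apply/eqP; rewrite -subr_eq0; apply/eqP.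
apply: (A_eq0 G_sym G_unit phi3 phi2 eta_xi eps_sign eta_bil A_ml); rewrite /A.
- by move=> *; rewrite T12 S12; ring.
- by move=> *; rewrite T34 S34; ring.
- by move=> *; rewrite Tpair Spair.
- by move=> x y z w; have := Tbianchi x y z w; have := Sbianchi x y z w; lra.
- move=> x y z w Dx Dy Dz Dw.
  by have := Tphi x y z w Dx Dy Dz Dw; have := Sphi x y z w Dx Dy Dz Dw; lra.
- by move=> x y a Dx Dy; rewrite Ta ?subrr.
- by move=> x y a b Dx Dy; rewrite Tb ?subrr.
- by move=> x a b c Dx; rewrite Tc ?subrr.
- by move=> a b c d; rewrite Td subrr.
- by move=> x Dx nx; rewrite Tsect ?subrr.
Qed.
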